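(* Let $f$ be a transcendental meromorphic function projectable via $\exp_1$, written as $f(z)=\ell z+\Phi(e^{2\pi iz})$ with $\ell\in\mathbb{Z}$ and $\Phi$ meromorphic in $\mathbb{C}^*$, and let $g$ be its exponential projection. Then $z^*$ is a pseudoperiodic point of $f$ of minimal type $(p,\sigma)$, where $p\ge1$ and $\sigma\in\mathbb{Z}$, if and only if $e^{2\pi iz^*}$ is a periodic point of $g$ of minimal period $p$. In this case $z^*$ is a solution of $$(\ell^p-1)z+\sum_{j=0}^{p-1}\ell^{p-1-j}\,\Phi\big(g^j(e^{2\pi iz})\big)=\sigma.$$
   Context: $\exp_1(z)=e^{2\pi iz}$; $f$ is projectable via $\exp_1$ if there is $g$ with $g\circ\exp_1=\exp_1\circ f$ wherever defined; then $g(w)=w^\ell e^{2\pi i\Phi(w)}$. A point $z^*\in\mathbb{C}\setminus f^{-1}(\infty)$ is a pseudoperiodic point of type $(p,\sigma)$ of $f$ if $f^p(z^* )=z^*+\sigma$ for some $p\ge1$, $\sigma\in\mathbb{Z}$; it is of minimal type $(p,\sigma)$ if $p$ is the smallest natural number with this property. *)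

(* Complex numbers: mathcomp-real-closed's R[i]
   over an arbitrary R : realType, viewed as a normed module over itself
   (R[i])^o, so that [derivable F z 1] is complex differentiability. *)
From HB Require Import structures.
From mathcomp Require Import all_boot all_order all_algebra.
From mathcomp Require Import all_classical all_reals all_analysis.
From mathcomp Require Import complex.
Import Order.TTheory GRing.Theory Num.Theory.
Import numFieldNormedType.Exports.

Set Implicit Arguments.
Unset Strict Implicit.
Unset Printing Implicit Defensive.

Local Open Scope ring_scope.
Local Open Scope classical_set_scope.

Notation Cplx R := ((R[i])^o).

Section Defs.
Variable R : realType.
Local Notation C := (Cplx R).

Definition cexp (z : C) : C :=
  ((expR (@complex.Re R z) * cos (@complex.Im R z)) +i*
   (expR (@complex.Re R z) * sin (@complex.Im R z)))%C.

Definition exp1 (z : C) : C := cexp (2%:R * ((pi : R)%:C)%C * 'i%C * z).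

(* F is meromorphic on the open set U with pole set P (values of F on P are
   irrelevant junk): the poles are contained in U and do not accumulate in U,
   F is holomorphic (complex differentiable) at every point of U \ P, and
   F(z) -> infinity (i.e. 1/F(z) -> 0) at every pole. *)
Definition meromorphic_on (U : set C) (F : C -> C) (P : set C) : Prop :=
  [/\ open U, P `<=` U,
      (forall z, U z -> \forall w \near z^', ~ P w),
      (forall z, U z -> ~ P z -> derivable F z 1) &
      (forall p, P p -> (fun x => (F x)^-1) @ p^' --> (0 : C))].

Definition rational_mero (F : C -> C) (P : set C) : Prop :=
  exists (p q : {poly R[i]}), q != 0 /\
    forall z : C, ~ P z -> F z * q.[z] = p.[z].

Definition transcendental_mero (F : C -> C) (P : set C) : Prop :=
  ~ rational_mero F P.

Definition exp_proj (l : int) (Phi : C -> C) (w : C) : C :=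
  w ^ l * exp1 (Phi w).

Definition exp_proj_dom (PPhi : set C) : set C :=
  [set w | w != 0 /\ ~ PPhi w].

Definition iter_defined (D : set C) (h : C -> C) (n : nat) (z : C) : Prop :=
  forall j : nat, (j < n)%N -> D (iter j h z).

Definition pseudoperiodic (f : C -> C) (Pf : set C) (p : nat) (sigma : int)
  (z : C) : Prop :=
  [/\ (1 <= p)%N, iter_defined (~` Pf) f p z & iter p f z = z + sigma%:~R].

Definition pseudoperiodic_min (f : C -> C) (Pf : set C) (p : nat)
  (sigma : int) (z : C) : Prop :=
  pseudoperiodic f Pf p sigma z /\
  forall (q : nat) (s : int), (1 <= q < p)%N -> ~ pseudoperiodic f Pf q s z.

Definition periodic_min (D : set C) (h : C -> C) (p : nat) (w : C) : Prop :=
  [/\ (1 <= p)%N, iter_defined D h p w, iter p h w = w &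
      forall q : nat, (1 <= q < p)%N -> iter q h w <> w].

End Defs.

From HB Require Import structures.
From mathcomp Require Import all_boot all_order all_algebra.
From mathcomp Require Import all_classical all_reals all_analysis.
From mathcomp Require Import complex.
From mathcomp Require Import ring lra zify.
Import Order.TTheory GRing.Theory Num.Theory.
Import numFieldNormedType.Exports.

Set Implicit Arguments.
Unset Strict Implicit.
Unset Printing Implicit Defensive.

Local Open Scope ring_scope.
Local Open Scope classical_set_scope.

(* exp_1 semiconjugates f to g on the complement of the poles, and its
   kernel is exactly Z.  Hence f^q(z) - z is an integer iff exp_1 z is fixed
   by g^q, which matches the (minimal) types of f with the (minimal) periods
   of g; unrolling f^p(z) = l f^(p-1)(z) + Phi(g^(p-1)(exp_1 z)) gives the
   equation. *)

Section Exp1.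
Variable R : realType.
Local Notation C := (Cplx R).

Lemma cexpD (u v : C) : cexp (u + v) = cexp u * cexp v.
Proof.
case: u => a b; case: v => c d; rewrite /cexp /=.
rewrite -[((_ +i* _)%C * (_ +i* _)%C)]/(_ +i* _)%C expRD cosD sinD.
by congr (_ +i* _)%C; ring.
Qed.

Lemma exp1E (a b : R) : exp1 (a +i* b)%C =
  ((expR (- (2 * pi * b)) * cos (2 * pi * a)) +i*
   (expR (- (2 * pi * b)) * sin (2 * pi * a)))%C.
Proof. by congr ((expR _ * cos _) +i* (expR _ * sin _))%C; rewrite /=; ring. Qed.

Lemma exp1D (a b : C) : exp1 (a + b) = exp1 a * exp1 b.
Proof. by rewrite /exp1 mulrDr cexpD. Qed.

Lemma exp1_0 : exp1 (0 : C) = 1.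
Proof.
have -> : (0 : C) = (0 +i* 0)%C by [].
by rewrite exp1E !mulr0 oppr0 expR0 cos0 sin0 mulr1 mulr0.
Qed.

Lemma exp1_1 : exp1 (1 : C) = 1.
Proof.
have -> : (1 : C) = (1 +i* 0)%C by [].
rewrite exp1E !mulr0 oppr0 expR0 !mul1r mulr1.
by rewrite [2 * pi]mulr_natl cos2pi sin2pi.
Qed.

Lemma exp1_neq0 (z : C) : exp1 z != 0.
Proof.
apply/negP => /eqP ez0.
by have := exp1_0; rewrite -(subrr z) exp1D ez0 mul0r => /eqP; rewrite eq_sym oner_eq0.
Qed.

Lemma exp1N (z : C) : exp1 (- z) = (exp1 z)^-1.
Proof. by apply: (mulfI (exp1_neq0 z)); rewrite -exp1D subrr exp1_0 divff // exp1_neq0. Qed.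

Lemma exp1_natM (n : nat) (z : C) : exp1 (n%:R * z) = exp1 z ^+ n.
Proof.
elim: n => [|n IH]; first by rewrite mul0r exp1_0 expr0.
by rewrite -natr1 mulrDl mul1r exp1D IH exprSr.
Qed.

Lemma exp1_intM (k : int) (z : C) : exp1 (k%:~R * z) = exp1 z ^ k.
Proof.
case: k => n; first exact: exp1_natM.
by rewrite NegzE mulrNz mulNr exp1N exp1_natM.
Qed.

Lemma exp1_int (k : int) : exp1 (k%:~R : C) = 1.
Proof. by rewrite -[k%:~R]mulr1 exp1_intM exp1_1 exp1rz. Qed.

Lemma intr_complex (k : int) : (k%:~R : C) = ((k%:~R : R) +i* 0)%C.
Proof. by rewrite -(rmorph_int (real_complex R)). Qed.

Lemma cos_sin_2piM_int (k : int) :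
  cos (2 * pi * k%:~R) = 1 :> R /\ sin (2 * pi * k%:~R) = 0 :> R.
Proof.
have := exp1_int k; rewrite intr_complex exp1E mulr0 oppr0 expR0 !mul1r.
by move/eqP; rewrite eq_complex /= => /andP[/eqP -> /eqP ->].
Qed.

Lemma cos_2piM_intB (k : int) (s : R) :
  cos (2 * pi * (k%:~R - s)) = cos (2 * pi * s).
Proof.
have [ck sk] := cos_sin_2piM_int k.
by rewrite mulrBr cosB ck sk mul1r mul0r addr0.
Qed.

Lemma cos_2piM_eq1_small (s : R) :
  0 <= s <= 1 / 2 -> cos (2 * pi * s) = 1 -> s = 0.
Proof.
move=> /andP[s_ge0 s_le] cos1; have pi_gt0 := pi_gt0 R.
have : cos (2 * pi * s) = cos 0 by rewrite cos1 cos0.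
move/cos_inj; rewrite !in_itv /= lexx pi_ge0 /=.
have -> : 0 <= 2 * pi * s by rewrite !mulr_ge0 // ltW.
have -> : 2 * pi * s <= pi by nra.
move=> /(_ isT isT) /eqP.
by rewrite !mulf_eq0 (gt_eqF pi_gt0) pnatr_eq0 /= => /eqP.
Qed.

Lemma cos_2piM_eq1 (s : R) : cos (2 * pi * s) = 1 -> exists k : int, s = k%:~R.
Proof.
move=> cos1; set k := Num.floor s; exists k.
have k_le : (k%:~R : R) <= s by apply: real_floor_le; exact: num_real.
have lt_k1 : s < (k + 1)%:~R by apply: real_floorD1_gt; exact: num_real.
rewrite intrD in lt_k1.
have cos_frac1 : cos (2 * pi * (s - k%:~R)) = 1.
  by rewrite -opprB mulrN cosN cos_2piM_intB.
(* the fractional part lies in [0, 1); if it exceeds 1/2, use 1 minus it *)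
have [frac_small|frac_large] := lerP (s - k%:~R) (1 / 2).
  by apply/eqP; rewrite -subr_eq0; apply/eqP/cos_2piM_eq1_small => //; lra.
have : cos (2 * pi * (1%:~R - (s - k%:~R))) = 1 by rewrite cos_2piM_intB.
by move/cos_2piM_eq1_small; lra.
Qed.

Lemma exp1_eq1 (t : C) : exp1 t = 1 -> exists k : int, t = k%:~R.
Proof.
case: t => a b; rewrite exp1E => /eqP; rewrite eq_complex /=.
move=> /andP[/eqP re1 /eqP im0].
have e_gt0 := expR_gt0 (- (2 * pi * b)); have pi_gt0 := pi_gt0 R.
have sin0 : sin (2 * pi * a) = 0.
  by move/eqP: im0; rewrite mulf_eq0 gt_eqF //= => /eqP.
have cos1 : cos (2 * pi * a) = 1.
  have := sin0cos1 sin0; have [cos_gt0|cos_le0] := ltP 0 (cos (2 * pi * a)).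
    by rewrite gtr0_norm.
  by rewrite ler0_norm // => _; nra.
have -> : b = 0.
  have : expR (- (2 * pi * b)) = expR 0 by rewrite expR0; move: re1; rewrite cos1 mulr1.
  move/expR_inj/eqP; rewrite oppr_eq0 !mulf_eq0 (gt_eqF pi_gt0) pnatr_eq0 /=.
  by move/eqP.
by have [k ->] := cos_2piM_eq1 cos1; exists k; rewrite intr_complex.
Qed.

Lemma exp1_eq (a b : C) : exp1 a = exp1 b <-> exists k : int, a = b + k%:~R.
Proof.
split=> [eab|[k ->]]; last by rewrite exp1D exp1_int mulr1.
have /exp1_eq1[k kE] : exp1 (a - b) = 1 by rewrite exp1D exp1N eab divff // exp1_neq0.
by exists k; rewrite -kE addrC subrK.
Qed.

End Exp1.

Section Iterates.
Variable R : realType.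
Local Notation C := (Cplx R).

Lemma iter_definedS (D : set C) (h : C -> C) n z :
  iter_defined D h n.+1 z <-> iter_defined D h n z /\ D (iter n h z).
Proof.
split=> [defn1|[defn Dn] j]; first by split=> [j /leqW|]; apply: defn1.
by rewrite ltnS leq_eqVlt => /orP[/eqP -> //|]; apply: defn.
Qed.

Lemma iter_defined_le (D : set C) (h : C -> C) m n z :
  (m <= n)%N -> iter_defined D h n z -> iter_defined D h m z.
Proof. by move=> le_mn defn j lt_jm; apply: defn; exact: leq_trans lt_jm le_mn. Qed.

Section Semiconjugacy.
Variables (Df Dg : set C) (f g h : C -> C).
Hypothesis h_semiconj : forall z, Df z -> h (f z) = g (h z).

Lemma iter_semiconj n z : iter_defined Df f n z -> h (iter n f z) = iter n g (h z).
Proof.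
elim: n => [//|n IH] /iter_definedS[defn Dn].
by rewrite iterS h_semiconj // IH.
Qed.

Hypothesis dom_semiconj : forall z, Df z <-> Dg (h z).

Lemma iter_defined_semiconj n z :
  iter_defined Df f n z <-> iter_defined Dg g n (h z).
Proof.
elim: n => [|n IH]; first by split=> ? ?.
rewrite !iter_definedS; split=> [[defn Dn]|[/IH defn Dn]].
  by split; [apply/IH | rewrite -iter_semiconj // -dom_semiconj].
by split; last rewrite dom_semiconj iter_semiconj.
Qed.

End Semiconjugacy.

Section ExpProjection.
Variables (f Phi : C -> C) (Pf PPhi : set C) (l : int).
Hypothesis Pf_exp1 : Pf = (@exp1 R) @^-1` PPhi.
Hypothesis fE : forall z, ~ Pf z -> f z = l%:~R * z + Phi (exp1 z).
Local Notation g := (exp_proj l Phi).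
Local Notation Dg := (exp_proj_dom PPhi).

Lemma exp1_semiconj z : ~ Pf z -> exp1 (f z) = g (exp1 z).
Proof. by move=> Pfz; rewrite fE // exp1D exp1_intM. Qed.

Lemma notPf_exp1 z : ~ Pf z <-> Dg (exp1 z).
Proof. by rewrite Pf_exp1 /exp_proj_dom /= exp1_neq0; split=> [|[]]. Qed.

Lemma iter_defined_exp1 n z :
  iter_defined (~` Pf) f n z <-> iter_defined Dg g n (exp1 z).
Proof. exact: (iter_defined_semiconj (Df := ~` Pf) exp1_semiconj notPf_exp1). Qed.

Lemma pseudoperiodic_exp1 q z : (1 <= q)%N ->
  (exists s : int, pseudoperiodic f Pf q s z) <->
  iter_defined Dg g q (exp1 z) /\ iter q g (exp1 z) = exp1 z.
Proof.
move=> q_ge1; split=> [[s [_ defq fqE]]|[/iter_defined_exp1 defq gqE]].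
  split; first exact/iter_defined_exp1.
  by rewrite -(iter_semiconj exp1_semiconj) // fqE; apply/exp1_eq; exists s.
have /exp1_eq[s fqE] : exp1 (iter q f z) = exp1 z.
  by rewrite (iter_semiconj exp1_semiconj).
by exists s.
Qed.

Lemma pseudoperiodic_min_exp1 p z :
  (exists s : int, pseudoperiodic_min f Pf p s z) <->
  periodic_min Dg g p (exp1 z).
Proof.
split=> [[s [pp minp]]|[p_ge1 defp gpE minp]].
  have [p_ge1 _ _] := pp.
  have [defp gpE] := (pseudoperiodic_exp1 z p_ge1).1 (ex_intro _ s pp).
  split=> // q /andP[q_ge1 lt_qp] gqE.
  have defq := iter_defined_le (ltnW lt_qp) defp.
  have [s' ppq] := (pseudoperiodic_exp1 z q_ge1).2 (conj defq gqE).
  by apply: (minp q s'); rewrite ?q_ge1.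
have [s pp] := (pseudoperiodic_exp1 z p_ge1).2 (conj defp gpE).
exists s; split=> // q s' /andP[q_ge1 lt_qp] ppq.
apply: (minp q); first by rewrite q_ge1.
by have [] := (pseudoperiodic_exp1 z q_ge1).1 (ex_intro _ s' ppq).
Qed.

Lemma iter_exp_projE n z : iter_defined (~` Pf) f n z ->
  iter n f z = l%:~R ^+ n * z
     + \sum_(j < n) l%:~R ^+ (n - 1 - j) * Phi (iter j g (exp1 z)).
Proof.
elim: n => [|n IH]; first by rewrite big_ord0 expr0 mul1r addr0.
move=> /iter_definedS[defn Pfn].
rewrite iterS fE // (iter_semiconj exp1_semiconj) // IH // big_ord_recr /=.
rewrite !subSS !subn0 subnn expr0 mul1r mulrDr mulrA -exprS mulr_sumr addrA.
congr (_ + _ + _); apply: eq_bigr => j _; rewrite mulrA -exprS.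
by congr (_ ^+ _ * _); have := ltn_ord j; lia.
Qed.

End ExpProjection.

End Iterates.

Theorem lemma4p3 (R : realType) (f Phi : Cplx R -> Cplx R)
  (Pf PPhi : set (Cplx R)) (l : int) :
  meromorphic_on setT f Pf ->
  meromorphic_on [set w | w != 0] Phi PPhi ->
  transcendental_mero f Pf ->
  Pf = (@exp1 R) @^-1` PPhi ->
  (forall z, ~ Pf z -> f z = l%:~R * z + Phi (exp1 z)) ->
  forall (zs : Cplx R) (p : nat), (1 <= p)%N ->
  ((exists sigma : int, pseudoperiodic_min f Pf p sigma zs) <->
     periodic_min (exp_proj_dom PPhi) (exp_proj l Phi) p (exp1 zs)) /\
  (forall sigma : int, pseudoperiodic_min f Pf p sigma zs ->
     (l%:~R ^+ p - 1) * zs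
     + \sum_(j < p) l%:~R ^+ (p - 1 - j) * Phi (iter j (exp_proj l Phi) (exp1 zs))
     = sigma%:~R).
Proof.
move=> _ _ _ Pf_exp1 fE zs p _.
split; first exact: pseudoperiodic_min_exp1.
move=> s [[_ defp fpE] _].
have := iter_exp_projE fE defp; rewrite fpE => /(congr1 (fun x => x - zs)).
by rewrite addrAC subrr add0r => ->; ring.
Qed.
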